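(* Let $\mathcal{M}\subseteq\mathbb{S}^n$ be a finite union of compact sets, $\mathcal{M}=\bigcup_{i=1}^k\mathcal{M}_i$. Suppose that for all nonzero $X\in\mathbb{S}^n_+$ and all $i\in\{1,\dots,k\}$, if $\langle M_i,X\rangle=0$ for some $M_i\in\mathcal{M}_i$, then $\langle M,X\rangle>0$ for all $M\in\mathcal{M}\setminus\mathcal{M}_i$. Then $\mathcal{S}(\mathcal{M})$ is rank-one generated if and only if $\mathcal{S}(\mathcal{M}_i)$ is rank-one generated for all $i\in\{1,\dots,k\}$.
   Context: $\mathbb{S}^n$ denotes real symmetric $n\times n$ matrices with $\langle A,B\rangle=\mathrm{tr}(AB)$, $\mathbb{S}^n_+$ the PSD cone. For $\mathcal{M}\subseteq\mathbb{S}^n$, $\mathcal{S}(\mathcal{M})=\{X\in\mathbb{S}^n_+:\langle M,X\rangle\ge0\ \forall M\in\mathcal{M}\}$. A closed convex cone $\mathcal{S}\subseteq\mathbb{S}^n_+$ is rank-one generated (ROG) if $\mathcal{S}=\mathrm{conv}(\mathcal{S}\cap\{xx^\top:x\in\mathbb{R}^n\})$. *)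

From HB Require Import structures.
From mathcomp Require Import all_boot all_order all_algebra.
From mathcomp Require Import all_classical all_reals all_analysis.
Set Implicit Arguments. Unset Strict Implicit. Unset Printing Implicit Defensive.
Import Order.TTheory GRing.Theory Num.Theory.
Local Open Scope ring_scope.
Local Open Scope classical_set_scope.

Definition symmx (R : realType) (n : nat) (A : 'M[R]_n) : Prop := A^T = A.

Definition psd (R : realType) (n : nat) (X : 'M[R]_n) : Prop :=
  symmx X /\ forall x : 'cV[R]_n, 0 <= (x^T *m X *m x) 0 0.

Definition mxip (R : realType) (n : nat) (A B : 'M[R]_n) : R := \tr (A *m B).

Definition SM (R : realType) (n : nat) (M : set 'M[R]_n) : set 'M[R]_n :=
  [set X | psd X /\ forall A, M A -> 0 <= mxip A X].

Definition rank1 (R : realType) (n : nat) : set 'M[R]_n :=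
  [set X | exists x : 'cV[R]_n, X = x *m x^T].

Definition conv (R : realType) (n : nat) (A : set 'M[R]_n) : set 'M[R]_n :=
  [set X | exists (m : nat) (w : 'I_m -> R) (Y : 'I_m -> 'M[R]_n),
     (forall i, 0 <= w i) /\ \sum_(i < m) w i = 1 /\ (forall i, A (Y i)) /\
     X = \sum_(i < m) w i *: Y i].

Definition ROG (R : realType) (n : nat) (S : set 'M[R]_n) : Prop :=
  S = conv (S `&` @rank1 R n).

From Pilot Require Import Defs.
From HB Require Import structures.
From mathcomp Require Import all_boot all_order all_algebra.
From mathcomp Require Import all_classical all_reals all_analysis.
From mathcomp Require Import ring lra.
Import Order.TTheory GRing.Theory Num.Theory numFieldNormedType.Exports.
Local Open Scope ring_scope.
Local Open Scope classical_set_scope.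
Set Implicit Arguments. Unset Strict Implicit. Unset Printing Implicit Defensive.

(* A PSD matrix X is a finite sum of rank-one matrices v v^T. For t in [-1, 1],
   X + t (v0 v0^T - v1 v1^T) stays PSD, and at t = 1 or t = -1 it is a sum of
   fewer rank-one terms; for compact N it can leave S(N) before that only at a
   point where some constraint <M, .> >= 0, M in N, is active. X is a convex
   combination of the two exit points, so by induction on the number of terms
   S(N) is rank-one generated as soon as every X in S(N) with an active
   constraint is a sum of rank-one elements of S(N). The separation hypothesis
   says that an X in S(M_i) with an active constraint from M_i lies in S(M),
   and every rank-one summand of such an X keeps that constraint active; this
   transfers rank-one decompositions in both directions. *)

Lemma cone_segment (R : realFieldType) (V : lmodType R) (C : set V) :
    (forall x y, C x -> C y -> C (x + y)) ->
    (forall a x, 0 <= a -> C x -> C (a *: x)) ->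
  forall x d (a b : R), 0 <= a -> 0 <= b ->
    C (x + a *: d) -> C (x - b *: d) -> C x.
Proof.
move=> CD CZ x d a b a0 b0 Ca Cb.
have [ab0|ab_neq0] := eqVneq (a + b) 0.
  move: Ca; have -> : a = 0 by lra.
  by rewrite scale0r addr0.
have -> : x = (b / (a + b)) *: (x + a *: d) + (a / (a + b)) *: (x - b *: d).
  rewrite !scalerDr !scalerN !scalerA addrACA.
  have -> : b / (a + b) * a = a / (a + b) * b by ring.
  rewrite subrr addr0 -scalerDl -mulrDl.
  by rewrite addrC divff // scale1r.
by apply: CD; apply: CZ => //; rewrite divr_ge0 // addr_ge0.
Qed.

(** * Positive semidefinite matrices as sums of rank-one matrices *)

Section PsdDecomposition.
Variables (R : realType) (n : nat).
Implicit Types (X Y : 'M[R]_n) (x y v : 'cV[R]_n).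

Definition outer v : 'M[R]_n := v *m v^T.

Definition bform X x y : R := (x^T *m X *m y) 0 0.

Lemma bformDl X x1 x2 y : bform X (x1 + x2) y = bform X x1 y + bform X x2 y.
Proof. by rewrite /bform linearD !mulmxDl mxE. Qed.
Lemma bformDr X x y1 y2 : bform X x (y1 + y2) = bform X x y1 + bform X x y2.
Proof. by rewrite /bform mulmxDr mxE. Qed.
Lemma bformZl X a x y : bform X (a *: x) y = a * bform X x y.
Proof. by rewrite /bform linearZ -!scalemxAl mxE. Qed.
Lemma bformZr X a x y : bform X x (a *: y) = a * bform X x y.
Proof. by rewrite /bform -scalemxAr mxE. Qed.
Lemma bformDm X Y x y : bform (X + Y) x y = bform X x y + bform Y x y.
Proof. by rewrite /bform mulmxDr mulmxDl mxE. Qed.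
Lemma bformZm a X x y : bform (a *: X) x y = a * bform X x y.
Proof. by rewrite /bform -scalemxAr -scalemxAl mxE. Qed.

Lemma bformC X x y : symmx X -> bform X x y = bform X y x.
Proof.
move=> sX; have tr11 (B : 'M[R]_1) : B 0 0 = B^T 0 0 by rewrite mxE.
by rewrite /bform tr11 !trmx_mul trmxK sX mulmxA.
Qed.

Lemma bform_delta X i j : bform X (delta_mx i 0) (delta_mx j 0) = X i j.
Proof. by rewrite /bform trmx_delta -rowE -colE !mxE. Qed.

Lemma bform_outer c x y : bform (outer c) x y = (x^T *m c) 0 0 * (c^T *m y) 0 0.
Proof. by rewrite /bform /outer mulmxA -mulmxA mxE big_ord1. Qed.

Lemma bform_mulmx X x y : (x^T *m (X *m y)) 0 0 = bform X x y.
Proof. by rewrite mulmxA. Qed.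

Lemma psd_add X Y : psd X -> psd Y -> psd (X + Y).
Proof.
move=> [sX pX] [sY pY]; split; first by rewrite /symmx linearD /= sX sY.
by move=> x; rewrite -/(bform _ x x) bformDm; apply: addr_ge0; [exact: pX | exact: pY].
Qed.

Lemma psd_scale a X : 0 <= a -> psd X -> psd (a *: X).
Proof.
move=> a0 [sX pX]; split; first by rewrite /symmx linearZ /= sX.
by move=> x; rewrite -/(bform _ x x) bformZm; apply: mulr_ge0 => //; exact: pX.
Qed.

Lemma outerZ a v : outer (a *: v) = (a * a) *: outer v.
Proof. by rewrite /outer linearZ /= -scalemxAl -scalemxAr scalerA. Qed.

Lemma psd_outer v : psd (outer v).
Proof.
split; first by rewrite /symmx /outer trmx_mul trmxK.
move=> x; rewrite -/(bform _ x x) bform_outer.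
have -> : (v^T *m x) = (x^T *m v)^T by rewrite trmx_mul trmxK.
by rewrite [_^T 0 0]mxE -expr2 sqr_ge0.
Qed.

Lemma psd0 : psd (0 : 'M[R]_n).
Proof. by have := psd_outer 0; rewrite /outer mul0mx. Qed.

Lemma psd_sum_outer (s : seq 'cV[R]_n) : psd (\sum_(v <- s) outer v).
Proof. by apply: big_ind => [||v _]; [exact: psd0 | exact: psd_add | exact: psd_outer]. Qed.

Lemma psd_diag_ge0 X i : psd X -> 0 <= X i i.
Proof. by move=> [_ pX]; rewrite -bform_delta; apply: pX. Qed.

Lemma psd_diag_eq0 X i j : psd X -> X i i = 0 -> X i j = 0.
Proof.
move=> [sX pX] Xii; apply/eqP/negPn/negP => Xij_neq0.
(* The quadratic form at [a e_i + e_j] is [2 a X_ij + X_jj = -1]. *)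
pose a := - (X j j + 1) / (2 * X i j).
have := pX (a *: delta_mx i 0 + delta_mx j 0); rewrite -/(bform _ _ _).
rewrite bformDl !bformDr !bformZl !bformZr !bform_delta Xii.
rewrite -[X j i]bform_delta bformC // bform_delta.
have -> : a * X i j = - (X j j + 1) / 2 by rewrite /a; field.
lra.
Qed.

Lemma bform_outer_col X e x y : symmx X ->
  bform (outer (X *m e)) x y = bform X x e * bform X e y.
Proof.
move=> sX; rewrite bform_outer trmx_mul sX !bform_mulmx.
by rewrite -mulmxA bform_mulmx.
Qed.

Section SchurComplement.
Variables (X : 'M[R]_n) (i : 'I_n).
Hypotheses (psdX : psd X) (Xii_gt0 : 0 < X i i).

Let e := delta_mx i 0 : 'cV[R]_n.
Definition schur_compl := X - (X i i)^-1 *: outer (X *m e).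

Lemma schur_complE j k : schur_compl j k = X j k - (X i i)^-1 * (X j i * X i k).
Proof.
rewrite -[LHS]bform_delta /schur_compl bformDm -scaleN1r !bformZm.
by rewrite bform_outer_col ?bform_delta; [ring | case: psdX].
Qed.

Lemma psd_schur_compl : psd schur_compl.
Proof.
case: psdX => sX pX; split.
  by rewrite /symmx /schur_compl linearB linearZ /= /outer trmx_mul trmxK sX.
move=> x; rewrite -/(bform _ x x) /schur_compl bformDm -scaleN1r !bformZm.
rewrite bform_outer_col // (bformC x e sX).
set b := bform X e x; set d := X i i.
have := pX (x + (- (b / d)) *: e); rewrite -/(bform _ _ _).
rewrite bformDl !bformDr !bformZl !bformZr bform_delta -/d (bformC x e sX) -/b.
have d_neq0 : d != 0 by rewrite gt_eqF.
by congr (0 <= _); field.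
Qed.

Lemma schur_compl_diag_eq0 j : X j j = 0 -> schur_compl j j = 0.
Proof.
move=> Xjj; have [sX _] := psdX.
have Xji : X j i = 0 by exact: psd_diag_eq0.
by rewrite schur_complE Xjj Xji !mul0r mulr0 subrr.
Qed.

Lemma schur_compl_ii : schur_compl i i = 0.
Proof. by rewrite schur_complE mulrA mulVf ?mul1r ?subrr // gt_eqF. Qed.

End SchurComplement.

Lemma psd_diag0_eq0 X : psd X -> (forall j, X j j = 0) -> X = 0.
Proof. by move=> pX X0; apply/matrixP => i j; rewrite mxE; exact: psd_diag_eq0. Qed.

Lemma psd_decomp_outer X : psd X -> exists s : seq 'cV[R]_n, X = \sum_(v <- s) outer v.
Proof.
(* Each Schur complement step clears the row and column of a nonzero diagonal
   entry, so induct on a list covering the nonzero diagonal entries. *)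
move=> pX; suff /(_ (enum 'I_n) X pX) : forall (s : seq 'I_n) X, psd X ->
    (forall j, j \notin s -> X j j = 0) -> exists s, X = \sum_(v <- s) outer v.
  by apply=> // j; rewrite mem_enum.
elim=> [|i s IHs] {pX}X pX supp.
  by exists [::]; rewrite big_nil; apply: psd_diag0_eq0 => // j; apply: supp.
have [Xii0|Xii_neq0] := eqVneq (X i i) 0.
  apply: IHs => // j js; have [->//|j_neq_i] := eqVneq j i.
  by apply: supp; rewrite in_cons negb_or j_neq_i.
have Xii_gt0 : 0 < X i i by rewrite lt_def Xii_neq0 psd_diag_ge0.
have [s' Xs'] : exists s', schur_compl X i = \sum_(v <- s') outer v.
  apply: IHs; first exact: psd_schur_compl.
  move=> j js; have [->|j_neq_i] := eqVneq j i; first exact: schur_compl_ii.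
  by apply: schur_compl_diag_eq0 => //; apply: supp; rewrite in_cons negb_or j_neq_i.
exists ((Num.sqrt (X i i))^-1 *: (X *m delta_mx i 0) :: s').
rewrite big_cons -Xs' outerZ -invfM -expr2 sqr_sqrtr ?ltW //.
by rewrite /schur_compl addrC subrK.
Qed.

End PsdDecomposition.

(** * Rank-one generated cones *)

Section Rank1Cone.
Variables (R : realType) (n : nat).
Implicit Types (M X Y : 'M[R]_n) (v : 'cV[R]_n) (C N : set 'M[R]_n).

Lemma mxipD M X Y : mxip M (X + Y) = mxip M X + mxip M Y.
Proof. by rewrite /mxip mulmxDr mxtraceD. Qed.
Lemma mxipZ M a X : mxip M (a *: X) = a * mxip M X.
Proof. by rewrite /mxip -scalemxAr mxtraceZ. Qed.
Lemma mxip0 M : mxip M 0 = 0.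
Proof. by rewrite /mxip mulmx0 mxtrace0. Qed.
Lemma mxip_sum M (s : seq 'cV[R]_n) (F : 'cV[R]_n -> 'M[R]_n) :
  mxip M (\sum_(v <- s) F v) = \sum_(v <- s) mxip M (F v).
Proof. by rewrite /mxip mulmx_sumr raddf_sum. Qed.

Section SMCone.
Variable N : set 'M[R]_n.

Lemma SM0 : SM N 0.
Proof. by split=> [|A _]; [exact: psd0 | rewrite mxip0]. Qed.

Lemma SM_add X Y : SM N X -> SM N Y -> SM N (X + Y).
Proof.
move=> [pX cX] [pY cY]; split=> [|A NA]; first exact: psd_add.
by rewrite mxipD addr_ge0 // ?cX ?cY.
Qed.

Lemma SM_scale a X : 0 <= a -> SM N X -> SM N (a *: X).
Proof.
move=> a0 [pX cX]; split=> [|A NA]; first exact: psd_scale.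
by rewrite mxipZ mulr_ge0 // cX.
Qed.

End SMCone.

Lemma SM_anti N (N' : set 'M[R]_n) : N `<=` N' -> SM N' `<=` SM N.
Proof. by move=> NN' X [pX cX]; split=> // A /NN'; exact: cX. Qed.

Definition rank1_cone (C : set 'M[R]_n) : set 'M[R]_n :=
  [set X | exists s : seq 'cV[R]_n,
     (forall v, v \in s -> C (outer v)) /\ X = \sum_(v <- s) outer v].

Lemma rank1_cone_mono C (C' : set 'M[R]_n) : C `<=` C' -> rank1_cone C `<=` rank1_cone C'.
Proof. by move=> CC' X [s [Cs ->]]; exists s; split=> // v /Cs /CC'. Qed.

Lemma rank1_cone0 C : rank1_cone C 0.
Proof. by exists [::]; rewrite big_nil. Qed.

Lemma rank1_cone_outer C v : C (outer v) -> rank1_cone C (outer v).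
Proof. by exists [:: v]; rewrite big_seq1; split=> // w; rewrite inE => /eqP ->. Qed.

Lemma rank1_coneD C X Y : rank1_cone C X -> rank1_cone C Y -> rank1_cone C (X + Y).
Proof.
move=> [s [Cs ->]] [t [Ct ->]]; exists (s ++ t); rewrite big_cat; split=> // v.
by rewrite mem_cat => /orP[/Cs|/Ct].
Qed.

Section ConvexCone.
Variable C : set 'M[R]_n.
Hypotheses (C0 : C 0) (CD : forall X Y, C X -> C Y -> C (X + Y))
  (CZ : forall a X, 0 <= a -> C X -> C (a *: X)).

Lemma rank1_coneZ a X : 0 <= a -> rank1_cone C X -> rank1_cone C (a *: X).
Proof.
move=> a0 [s [Cs ->]]; exists [seq Num.sqrt a *: v | v <- s]; split.
  by move=> _ /mapP[v /Cs Cv ->]; rewrite outerZ -expr2 sqr_sqrtr //; apply: CZ.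
by rewrite big_map scaler_sumr; apply: eq_bigr => v _; rewrite outerZ -expr2 sqr_sqrtr.
Qed.

Lemma rank1_cone_sub : rank1_cone C `<=` C.
Proof. by move=> _ [s [Cs ->]]; rewrite big_seq; apply: big_ind => // v /Cs. Qed.

Lemma conv_rank1E : Defs.conv (C `&` @rank1 R n) = rank1_cone C.
Proof.
apply/seteqP; split=> X.
  move=> [m [w [Y [w0 [_ [CY ->]]]]]].
  apply: (big_ind (rank1_cone C)) => [|Z Z'|i _]; first exact: rank1_cone0.
    exact: rank1_coneD.
  apply: rank1_coneZ => //; have [CYi [y Yi]] := CY i.
  by rewrite Yi; apply: rank1_cone_outer; rewrite /outer -Yi.
move=> [[|v0 s'] [Cs ->]].
  exists 1%N, (fun=> 1), (fun=> 0); do !split => //; rewrite ?big_nil ?big_ord1 ?scaler0 //.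
  by exists 0; rewrite mul0mx.
set s := v0 :: s'; set m := size s.
have m_gt0 : 0 < m%:R :> R by rewrite ltr0n.
exists m, (fun=> m%:R^-1), (fun i => m%:R *: outer (nth 0 s i)); split.
  by move=> _; rewrite invr_ge0 ltW.
split; first by rewrite sumr_const card_ord -[_ *+ _]mulr_natr mulVf // gt_eqF.
split.
  move=> i; split; first by apply: CZ; [exact: ltW | apply: Cs; rewrite mem_nth].
  exists (Num.sqrt m%:R *: nth 0 s i).
  by rewrite -/(outer _) outerZ -expr2 sqr_sqrtr // ltW.
rewrite (big_nth 0) big_mkord; apply: eq_bigr => i _.
by rewrite scalerA mulVf ?scale1r // gt_eqF.
Qed.

Lemma ROG_rank1_cone : ROG C <-> C `<=` rank1_cone C.
Proof.
rewrite /ROG conv_rank1E; split=> [<-//|sub].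
by apply/seteqP; split=> //; exact: rank1_cone_sub.
Qed.

End ConvexCone.

Lemma ROG_SM N : ROG (SM N) <-> SM N `<=` rank1_cone (SM N).
Proof. by apply: ROG_rank1_cone; [exact: SM0 | exact: SM_add | exact: SM_scale]. Qed.

Lemma rank1_cone_face C M X :
    (forall Y, C Y -> 0 <= mxip M Y) -> rank1_cone C X -> mxip M X = 0 ->
  rank1_cone (C `&` [set Y | mxip M Y = 0]) X.
Proof.
move=> C_ge0 [s [Cs ->]] /eqP; rewrite mxip_sum big_seq psumr_eq0 => [/allP s0|v /Cs]; last first.
  exact: C_ge0.
by exists s; split=> // v vs; split; [exact: Cs | apply/eqP; move: (s0 v vs); rewrite vs].
Qed.

End Rank1Cone.

(** * Exit points of a segment from a compactly constrained region *)

Lemma mxip_continuous (R : realType) n (Y : 'M[R]_n) :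
  continuous (fun M : 'M[R]_n => mxip M Y).
Proof.
have -> : (fun M : 'M[R]_n => mxip M Y) = fun M => \sum_i \sum_j M i j * Y j i.
  by apply/funext => M; apply: eq_bigr => i _; rewrite mxE.
apply: continuous_big => [|i _]; first exact: add_continuous.
apply: continuous_big => [|j _]; first exact: add_continuous.
by move=> M; apply: continuousM; [exact: coord_continuous | exact: cst_continuous].
Qed.

Section CompactFamily.
Variables (T : topologicalType) (R : realType) (N : set T).
Hypothesis cN : compact N.
Implicit Types f g : T -> R.

Lemma compact_pos_margin f g : continuous f -> continuous g -> (forall M, N M -> 0 < f M) ->
  exists2 e, 0 < e & forall M s, N M -> 0 <= s <= e -> 0 <= f M + s * g M.
Proof.
move=> f_cont g_cont f_gt0; have [N_neq0|N0] := pselect (N !=set0); last first.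
  by exists 1 => // M s NM; exfalso; apply: N0; exists M.
have [Mf /[!inE] NMf fmin] := compact_EVT_min N_neq0 cN (continuous_subspaceT f_cont).
have [Mg /[!inE] NMg gmin] := compact_EVT_min N_neq0 cN (continuous_subspaceT g_cont).
have fMf_gt0 := f_gt0 _ NMf.
exists (f Mf / (1 + `|g Mg|)); first by rewrite divr_gt0 // ltr_pwDl.
move=> M s NM /andP[s0 se].
have fM : f Mf <= f M by apply: fmin; rewrite inE.
have gM : - `|g Mg| <= g M by apply: le_trans (gmin _ _); rewrite ?inE // lerNl -normrN ler_norm.
have : s * (1 + `|g Mg|) <= f Mf by rewrite -ler_pdivlMr // ltr_pwDl.
have : s * - `|g Mg| <= s * g M by rewrite ler_wpM2l.
nra.
Qed.

Lemma compact_segment_exit f g : continuous f -> continuous g -> (forall M, N M -> 0 <= f M) ->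
  exists t, [/\ 0 <= t <= 1, forall M, N M -> 0 <= f M + t * g M &
    t = 1 \/ exists2 M, N M & f M + t * g M = 0].
Proof.
move=> f_cont g_cont f_ge0.
pose feasible := [set t : R | 0 <= t <= 1 /\ forall M, N M -> 0 <= f M + t * g M].
have feasible0 : feasible 0 by split=> [|M NM]; rewrite ?lexx ?ler01 ?mul0r ?addr0 ?f_ge0.
have feasible_sup : has_sup feasible by split; [exists 0 | exists 1 => t [/andP[]]].
pose t0 := sup feasible.
have t0_ge0 : 0 <= t0 by exact: sup_upper_bound.
have t0_le1 : t0 <= 1 by apply: ge_sup; [exists 0 | move=> t [/andP[]]].
have t0_ok M : N M -> 0 <= f M + t0 * g M.
  move=> NM; have [g_ge0|g_lt0] := leP 0 (g M); first by rewrite addr_ge0 ?mulr_ge0 ?f_ge0.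
  have : t0 <= f M / - g M.
    apply: ge_sup; first by exists 0.
    by move=> t [_ /(_ M NM)]; rewrite ler_pdivlMr ?oppr_gt0 //; lra.
  by rewrite ler_pdivlMr ?oppr_gt0 //; lra.
exists t0; split=> //; first by rewrite t0_ge0.
have [->|t0_neq1] := eqVneq t0 1; [by left | right].
case: (pselect (exists2 M, N M & f M + t0 * g M = 0)) => // no_zero; exfalso.
(* Without an active constraint at [t0 < 1], the margin of [compact_pos_margin]
   yields a feasible parameter beyond the supremum. *)
have t0_gt M : N M -> 0 < f M + t0 * g M.
  by move=> NM; rewrite lt_def t0_ok // andbT; apply/eqP => z; apply: no_zero; exists M.
have fg_cont : continuous (fun M => f M + t0 * g M).
  move=> M; apply: (@continuousD _ _ _ f (fun M => t0 * g M)); first exact: f_cont.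
  by apply: continuousM; [exact: cst_continuous | exact: g_cont].
have [e e_gt0 margin] := compact_pos_margin fg_cont g_cont t0_gt.
pose d := Num.min e (1 - t0).
have d_gt0 : 0 < d by rewrite lt_min e_gt0 subr_gt0 lt_neqAle t0_neq1.
have : feasible (t0 + d).
  split=> [|M NM]; first by apply/andP; split; [lra | rewrite -lerBrDl ge_min lexx orbT].
  have := margin M d NM; rewrite ltW //= ge_min lexx => /(_ isT); lra.
by move=> /(sup_upper_bound feasible_sup); rewrite -/t0; lra.
Qed.

End CompactFamily.

(** * Reduction to faces *)

Section FaceReduction.
Variables (R : realType) (n : nat) (N : set 'M[R]_n).
Hypotheses (cN : compact N)
  (face : forall X, SM N X -> (exists2 M, N M & mxip M X = 0) -> rank1_cone (SM N) X).

Lemma SM_segment_exit X D : SM N X -> (forall t, 0 <= t <= 1 -> psd (X + t *: D)) ->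
  exists t, [/\ 0 <= t <= 1, SM N (X + t *: D) &
    t = 1 \/ exists2 M, N M & mxip M (X + t *: D) = 0].
Proof.
move=> [_ X_ge0] psd_seg.
have := compact_segment_exit cN (mxip_continuous (Y := X)) (mxip_continuous (Y := D)) X_ge0.
move=> [t [t01 ge0 exit]]; exists t; split=> //.
  by split=> [|M NM]; rewrite ?mxipD ?mxipZ; [exact: psd_seg | exact: ge0].
by case: exit => [|[M NM]]; [left | right; exists M; rewrite ?mxipD ?mxipZ].
Qed.

Lemma rank1_cone_exit v0 v1 (s : seq 'cV[R]_n) :
    (forall v, SM N (outer v + \sum_(w <- s) outer w) ->
       rank1_cone (SM N) (outer v + \sum_(w <- s) outer w)) ->
    SM N (outer v0 + (outer v1 + \sum_(w <- s) outer w)) ->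
  exists2 t, 0 <= t & rank1_cone (SM N)
    (outer v0 + (outer v1 + \sum_(w <- s) outer w) + t *: (outer v0 - outer v1)).
Proof.
set Y := \sum_(w <- s) outer w => IHs SM_X.
have psd_seg t :
    0 <= t <= 1 -> psd (outer v0 + (outer v1 + Y) + t *: (outer v0 - outer v1)).
  move=> /andP[t_ge0 t_le1].
  have -> : outer v0 + (outer v1 + Y) + t *: (outer v0 - outer v1) =
      (1 + t) *: outer v0 + ((1 - t) *: outer v1 + Y).
    by apply/matrixP => i j; rewrite !mxE; ring.
  apply: psd_add; first by apply: psd_scale (psd_outer _); lra.
  apply: psd_add (psd_sum_outer _); by apply: psd_scale (psd_outer _); lra.
have [t [/andP[t_ge0 _] SM_t [t1|]]] := SM_segment_exit SM_X psd_seg; exists t => //.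
  have X_D : outer v0 + (outer v1 + Y) + t *: (outer v0 - outer v1) =
      outer (Num.sqrt 2 *: v0) + Y.
    rewrite t1 outerZ -expr2 sqr_sqrtr ?ler0n //.
    by apply/matrixP => i j; rewrite !mxE; ring.
  by rewrite X_D; apply: IHs; rewrite -X_D.
exact: face.
Qed.

Lemma SM_sub_rank1_cone : SM N `<=` rank1_cone (SM N).
Proof.
move=> X SM_X; have [[|v0 s] X_s] := psd_decomp_outer SM_X.1.
  by rewrite X_s big_nil; exact: rank1_cone0.
rewrite X_s in SM_X *; elim: s v0 SM_X {X_s} => [|v1 s IHs] v0.
  by rewrite big_seq1; exact: rank1_cone_outer.
rewrite !big_cons => SM_X.
have IHs' v : SM N (outer v + \sum_(w <- s) outer w) ->
    rank1_cone (SM N) (outer v + \sum_(w <- s) outer w).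
  by have := IHs v; rewrite big_cons.
have [a a_ge0 K_a] := rank1_cone_exit IHs' SM_X.
have SM_X' : SM N (outer v1 + (outer v0 + \sum_(w <- s) outer w)) by rewrite addrCA.
have [b b_ge0 K_b] := rank1_cone_exit IHs' SM_X'.
apply: (cone_segment _ _ a_ge0 b_ge0 K_a).
- by move=> ? ?; apply: rank1_coneD.
- by move=> ? ? ?; apply: rank1_coneZ => //; exact: SM_scale.
by rewrite addrCA -scalerN opprB.
Qed.

End FaceReduction.

Lemma compact_bigcup_finType (T : topologicalType) (I : finType) (F : I -> set T) :
  (forall i, compact (F i)) -> compact (\bigcup_(i in [set: I]) F i).
Proof.
move=> cF; rewrite -bigsetU_fset_set; last exact: finite_finset.
by apply: bigsetU_compact => i _; exact: cF.
Qed.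

Theorem lemma2p20 (R : realType) (n k : nat) (Ms : 'I_k -> set 'M[R]_n) :
  (forall i, Ms i `<=` [set A | symmx A]) ->
  (forall i, compact (Ms i : set 'M[R]_(n, n))) ->
  (forall X : 'M[R]_n, psd X -> X != 0 ->
     forall i : 'I_k, (exists2 Mi, Ms i Mi & mxip Mi X = 0) ->
       forall A, (\bigcup_(j in [set: 'I_k]) Ms j) A -> ~ Ms i A -> 0 < mxip A X) ->
  (ROG (SM (\bigcup_(j in [set: 'I_k]) Ms j)) <-> forall i, ROG (SM (Ms i))).
Proof.
move=> _ compact_Ms pos_off_face.
set U := \bigcup_(j in [set: 'I_k]) Ms j.
have compact_U : compact U by exact: compact_bigcup_finType.
have sub_U i : Ms i `<=` U by move=> M Mi; exists i.
have face_SM_U i Y : SM (Ms i) Y -> (exists2 M, Ms i M & mxip M Y = 0) -> SM U Y.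
  move=> [psdY Y_ge0] face; split=> // A UA.
  have [->|Y_neq0] := eqVneq Y 0; first by rewrite mxip0.
  have [/Y_ge0 //|notA] := pselect (Ms i A).
  exact/ltW/(pos_off_face Y psdY Y_neq0 i face A UA notA).
split=> [/ROG_SM ROG_U i | ROG_Ms]; apply/ROG_SM.
  apply: SM_sub_rank1_cone (compact_Ms i) _ => X SM_X face.
  exact/(rank1_cone_mono (SM_anti (sub_U i)))/ROG_U/(face_SM_U i).
apply: SM_sub_rank1_cone compact_U _ => X SM_X [M [i _ Mi] MX0].
have /(ROG_SM _).1 /(_ X (SM_anti (sub_U i) SM_X)) K_X := ROG_Ms i.
have := rank1_cone_face (fun Y (SM_Y : SM (Ms i) Y) => SM_Y.2 M Mi) K_X MX0.
by apply: rank1_cone_mono => Y [SM_Y MY0]; apply: (face_SM_U i); last exists M.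
Qed.
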